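(* Consider the sequentially observed MDP described in the context, and let $V^*_{t+1}\in\mathbb{R}^n$ be defined by the recursion in the context. Fix an epoch $t\in\{1,\dots,N-1\}$ and a state $i$. Let $H_i\in\mathbb{R}^{n\times m}$ have entries $H_i(j,k)=\big(r_t(i,a_k)+V^*_{t+1}(j)\big)G_i(j,k)$, and let $X_i^*\in\mathbb{R}^{n\times m}$ be an optimal solution of the linear program $$\max_{X_i\in\mathbb{R}^{n\times m}}\ \sum_{k=1}^m\sum_{j=1}^nH_i(j,k)X_i(j,k)$$ subject to, for $j=1,\dots,n$ and $k=1,\dots,m-1$, $0\le X_i(j,k)\le 1-\sum_{l=1}^{k-1}\sum_{s=1}^nG_i(s,l)X_i(s,l)$, and, for $j=1,\dots,n$, $X_i(j,m)=1-\sum_{l=1}^{m-1}\sum_{s=1}^nG_i(s,l)X_i(s,l)$. Let $z(1)=1$ and $z(k)=1-\sum_{l=1}^{k-1}\sum_{s=1}^nG_i(s,l)X_i^*(s,l)$ for $k=2,\dots,m$. Then $$V^*_t(i)=\mathrm{Tr}(H_i^TX_i^* ),$$ and the matrix $P^*_i(t)$ with entries $P^*_i(j,k,t)=X_i^*(j,k)/z(k)$ if $z(k)>0$ and $P^*_i(j,k,t)=1$ otherwise ($j=1,\dots,n$, $k=1,\dots,m$) attains the maximum defining $V^*_t(i)$, i.e. is an optimal decision at state $i$ and epoch $t$.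
   Context: States $S=\{1,\dots,n\}$; at every state the actions are $a_1,\dots,a_m$ (in this fixed order); decision epochs $t=1,\dots,N-1$, $N\ge 2$. For each epoch $t$, state $i$, action index $k$, $G_i(j,k)=G_i(j,k,t)\ge 0$ with $\sum_jG_i(j,k)=1$ is the probability that action $a_k$ in state $i$ leads to state $j$. Rewards $r_t(i,a_k)\in\mathbb{R}$ for $t\le N-1$ and terminal rewards $r_N(i)$, with vector $\mathbf{r}_N$. Model: at each epoch, in state $i$, for phases $k=1,\dots,m-1$ the agent observes the realized transition of action $a_k$ and accepts it (taking $a_k$) or rejects it; if $a_1,\dots,a_{m-1}$ are all rejected, $a_m$ is taken. Decision variables at epoch $t$: matrices $P_i(t)\in[0,1]^{n\times m}$ with entries $P_i(j,k)=P_i(j,k,t)$ (probability of accepting an observed transition to $j$ in state $i$, phase $k$), with $P_i(j,m)=1$ for all $j$; $\mathcal{C}$ is the set of all such matrices. Define $q_i(a_k)=\sum_jG_i(j,k)P_i(j,k)$; $p_i(a_k)=\big(\prod_{l=1}^{k-1}(1-q_i(a_l))\big)q_i(a_k)$ (empty product $=1$); $r_t(i)=\sum_{k=1}^mp_i(a_k)r_t(i,a_k)$; $M_t(j,i)=\sum_{k=1}^m\big(\prod_{l=1}^{k-1}(1-q_i(a_l))\big)G_i(j,k)P_i(j,k)$. The optimal values are defined recursively by $V^*_N(i)=r_N(i)$ and, for $t=N-1,\dots,1$, $V^*_t(i)=\max_{P_i(t)\in\mathcal{C}}\big\{r_t(i)+\sum_{j=1}^nM_t(j,i)V^*_{t+1}(j)\big\}$.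 *)

From HB Require Import structures.
From mathcomp Require Import all_boot all_order all_algebra.
From mathcomp Require Import all_classical all_reals.
Unset Printing Implicit Defensive.
Import Order.TTheory GRing.Theory Num.Theory.
Local Open Scope ring_scope.
Local Open Scope classical_set_scope.

(* States are 'I_n (state i+1 of the paper is i), actions are 'I_m
   (action a_{k+1} of the paper is k); the last action a_m is the k with k.+1 = m.
   Epochs t are natural numbers 1..N-1 as in the paper.
   G t i : 'M_(n,m) with (G t i) j k = G_i(j,k,t).
   r t i k = r_t(i,a_k), rN j = r_N(j). *)

Section Defs.
Variables (R : realType) (n m : nat).

Definition is_last (k : 'I_m) : bool := (k.+1 == m)%N.

Definition decision_set : set 'M[R]_(n, m) :=
  [set P | (forall j k, 0 <= P j k <= 1) /\ (forall j k, is_last k -> P j k = 1)].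

Variable Gi : 'M[R]_(n, m).

Definition qacc (P : 'M[R]_(n, m)) (k : 'I_m) : R := \sum_j Gi j k * P j k.

Definition surv (P : 'M[R]_(n, m)) (k : 'I_m) : R :=
  \prod_(l < m | (l < k)%N) (1 - qacc P l).

Definition pact (P : 'M[R]_(n, m)) (k : 'I_m) : R := surv P k * qacc P k.

Definition exp_reward (ri : 'I_m -> R) (P : 'M[R]_(n, m)) : R :=
  \sum_k pact P k * ri k.

Definition trans_prob (P : 'M[R]_(n, m)) (j : 'I_n) : R :=
  \sum_k surv P k * Gi j k * P j k.

Definition objective (ri : 'I_m -> R) (V : 'I_n -> R) (P : 'M[R]_(n, m)) : R :=
  exp_reward ri P + \sum_j trans_prob P j * V j.

Definition lp_mass (X : 'M[R]_(n, m)) (k : 'I_m) : R :=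
  1 - \sum_(l < m | (l < k)%N) \sum_s Gi s l * X s l.

Definition lp_feasible (X : 'M[R]_(n, m)) : Prop :=
  (forall j k, ~~ is_last k -> 0 <= X j k <= lp_mass X k) /\
  (forall j k, is_last k -> X j k = lp_mass X k).

Definition lp_obj (H X : 'M[R]_(n, m)) : R := \sum_k \sum_j H j k * X j k.

Definition lp_optimal (H X : 'M[R]_(n, m)) : Prop :=
  lp_feasible X /\ forall Y, lp_feasible Y -> lp_obj H Y <= lp_obj H X.

(* z(k) = lp_mass X k (z(1) = 1 since the sum is empty); recovered decision *)
Definition recover (X : 'M[R]_(n, m)) : 'M[R]_(n, m) :=
  \matrix_(j, k) (if 0 < lp_mass X k then X j k / lp_mass X k else 1).

End Defs.

Section Values.
Variables (R : realType) (n m N : nat).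
Variables (G : nat -> 'I_n -> 'M[R]_(n, m)) (r : nat -> 'I_n -> 'I_m -> R)
          (rN : 'I_n -> R).

(* values_from k = V^*_{N-k}; V^*_t(i) = max over C, written as the supremum
   (which is attained, see the theorem). *)
Fixpoint values_from (k : nat) : 'I_n -> R :=
  match k with
  | O => rN
  | k'.+1 => fun i =>
      sup [set objective R n m (G (N - k'.+1)%N i) (r (N - k'.+1)%N i) (values_from k') P
          | P in decision_set R n m]
  end.

Definition Vstar (t : nat) : 'I_n -> R := values_from (N - t).

End Values.

From HB Require Import structures.
From mathcomp Require Import all_boot all_order all_algebra.
From mathcomp Require Import all_classical all_reals.
From mathcomp Require Import ring zify.
Import Order.TTheory GRing.Theory Num.Theory.
Local Open Scope ring_scope.
Local Open Scope classical_set_scope.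

(** A decision P is encoded by the matrix X(j,k) = z(k) P(j,k),
   where z(k) is the probability of reaching phase k. The acceptance
   probabilities telescope, so z(k) = 1 - sum_(l<k) sum_s G(s,l) X(s,l): the
   encoding is LP-feasible and turns the objective into the linear form
   Tr(H^T X). Conversely, dividing a feasible X by its column masses gives a
   decision whose encoding is X again. Hence the LP and the maximisation over
   decisions have the same optimal values and corresponding optimisers. *)

Lemma big_ord_ltS {R : Type} {idx : R} (op : Monoid.com_law idx) {m k : nat}
    (F : 'I_m -> R) (ltkm : (k < m)%N) :
  \big[op/idx]_(l < m | (l < k.+1)%N) F l =
  op (\big[op/idx]_(l < m | (l < k)%N) F l) (F (Ordinal ltkm)).
Proof.
rewrite (bigD1 (Ordinal ltkm)) //= Monoid.mulmC; congr (op _ _).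
apply: eq_bigl => l; rewrite ltnS leq_eqVlt -val_eqE /=.
by case: ltngtP.
Qed.

Lemma sup_image_attained (T : Type) (R : realType) (A : set T) (f : T -> R)
    (x0 : T) :
  A x0 -> (forall x, A x -> f x <= f x0) -> sup (f @` A) = f x0.
Proof.
move=> Ax0 fx0_max; apply/le_anti/andP; split.
  by apply: ge_sup; [exists (f x0), x0 | move=> _ [x Ax <-]; exact: fx0_max].
by apply: ub_le_sup; [exists (f x0) => _ [x Ax <-]; exact: fx0_max | exists x0].
Qed.

Lemma lp_obj_mxtrace (R : realType) (n m : nat) (H X : 'M[R]_(n, m)) :
  lp_obj R n m H X = \tr (H^T *m X).
Proof.
apply: eq_bigr => k _; rewrite mxE.
by apply: eq_bigr => j _; rewrite mxE.
Qed.

Section Encoding.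
Variables (R : realType) (n m : nat) (Gi : 'M[R]_(n, m)).

Local Notation qacc := (qacc R n m Gi).
Local Notation surv := (surv R n m Gi).
Local Notation lp_mass := (lp_mass R n m Gi).
Local Notation lp_feasible := (lp_feasible R n m Gi).
Local Notation recover := (recover R n m Gi).
Local Notation decision_set := (decision_set R n m).

Definition occupation (P : 'M[R]_(n, m)) : 'M[R]_(n, m) :=
  \matrix_(j, k) (surv P k * P j k).

Lemma sum_pact_lt (P : 'M[R]_(n, m)) (k : nat) : (k <= m)%N ->
  \sum_(l < m | (l < k)%N) pact R n m Gi P l =
  1 - \prod_(l < m | (l < k)%N) (1 - qacc P l).
Proof.
elim: k => [|k IHk] lekm; first by rewrite !big_pred0 // subrr.
by rewrite !big_ord_ltS IHk 1?ltnW //; rewrite /pact /surv /=; ring.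
Qed.

Lemma lp_mass_occupation (P : 'M[R]_(n, m)) (k : 'I_m) :
  lp_mass (occupation P) k = surv P k.
Proof.
rewrite /lp_mass (eq_bigr (pact R n m Gi P)).
  by rewrite sum_pact_lt 1?ltnW // opprB addrC subrK.
move=> l _; rewrite /pact /qacc mulr_sumr; apply: eq_bigr => s _; rewrite mxE; ring.
Qed.

Lemma objective_occupation (ri : 'I_m -> R) (V : 'I_n -> R) (P : 'M[R]_(n, m)) :
  objective R n m Gi ri V P =
  lp_obj R n m (\matrix_(j, k) ((ri k + V j) * Gi j k)) (occupation P).
Proof.
rewrite /objective /exp_reward /trans_prob /lp_obj.
under [RHS]eq_bigr => k _ do under eq_bigr => j _ do rewrite !mxE !mulrDl.
under [RHS]eq_bigr => k _ do rewrite big_split /=.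
rewrite big_split /=; congr (_ + _).
  apply: eq_bigr => k _; rewrite /pact /qacc mulr_sumr mulr_suml.
  by apply: eq_bigr => j _; ring.
rewrite exchange_big /=; apply: eq_bigr => j _; rewrite mulr_suml.
by apply: eq_bigr => k _; ring.
Qed.

Section Substochastic.
Hypothesis Gi_ge0 : forall j k, 0 <= Gi j k.
Hypothesis Gi_sum_le1 : forall k, \sum_j Gi j k <= 1.

Lemma qacc_ge0_le1 (P : 'M[R]_(n, m)) (k : 'I_m) :
  decision_set P -> 0 <= qacc P k <= 1.
Proof.
case=> P01 _; apply/andP; split.
  by apply: sumr_ge0 => j _; rewrite mulr_ge0 //; case/andP: (P01 j k).
apply: le_trans (Gi_sum_le1 k); apply: ler_sum => j _.
by rewrite ler_piMr //; case/andP: (P01 j k).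
Qed.

Lemma surv_ge0 (P : 'M[R]_(n, m)) (k : 'I_m) : decision_set P -> 0 <= surv P k.
Proof.
move=> decP; apply: prodr_ge0 => l _.
by rewrite subr_ge0; case/andP: (qacc_ge0_le1 P l decP).
Qed.

Lemma occupation_feasible (P : 'M[R]_(n, m)) :
  decision_set P -> lp_feasible (occupation P).
Proof.
move=> decP; have [P01 P_last] := decP.
split=> j k; rewrite lp_mass_occupation mxE; last by move/P_last->; rewrite mulr1.
move=> _; case/andP: (P01 j k) => P_ge0 P_le1.
by rewrite mulr_ge0 ?surv_ge0 // ler_piMr ?surv_ge0.
Qed.

End Substochastic.

Section Feasible.
Variable X : 'M[R]_(n, m).
Hypothesis feasX : lp_feasible X.

(* Where z(k) <= 0 feasibility forces z(k) = 0 = X(j,k), so the junk value 1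
   of [recover] is harmless. *)
Lemma lp_mass_mul_recover (j : 'I_n) (k : 'I_m) :
  lp_mass X k * recover X j k = X j k.
Proof.
have [X_bnd X_last] := feasX; rewrite mxE.
case: ifP => [mass_gt0|mass_le0]; first by rewrite mulrC divfK ?gt_eqF.
rewrite mulr1; have [/X_last-> //|nlast_k] := boolP (is_last m k).
case/andP: (X_bnd j k nlast_k) => X_ge0 X_le.
by apply/eqP; rewrite eq_le X_le (le_trans _ X_ge0) // leNgt mass_le0.
Qed.

Lemma surv_recover (k : 'I_m) : surv (recover X) k = lp_mass X k.
Proof.
case: k => k ltkm; rewrite /surv /lp_mass /=.
elim: k ltkm => [|k IHk] ltSkm; first by rewrite !big_pred0 // subr0.
have ltkm := ltnW ltSkm.
rewrite !(big_ord_ltS _ _ ltkm) /= IHk // opprD addrA; set l := Ordinal ltkm.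
change (lp_mass X l * (1 - qacc (recover X) l) =
  lp_mass X l - \sum_s Gi s l * X s l).
rewrite mulrBr mulr1 /qacc mulr_sumr; congr (_ - _); apply: eq_bigr => s _.
by rewrite mulrCA lp_mass_mul_recover.
Qed.

Lemma occupation_recover : occupation (recover X) = X.
Proof.
by apply/matrixP => j k; rewrite mxE surv_recover lp_mass_mul_recover.
Qed.

Lemma recover_decision : decision_set (recover X).
Proof.
have [X_bnd X_last] := feasX.
split=> j k; rewrite mxE; case: ifP => // mass_gt0; last first.
- by move=> last_k; rewrite X_last // divff ?gt_eqF.
- by rewrite lexx andbT.
have [last_k|nlast_k] := boolP (is_last m k).
  by rewrite X_last // divff ?gt_eqF // lexx andbT.
case/andP: (X_bnd j k nlast_k) => X_ge0 X_le.
by rewrite divr_ge0 ?(le_trans X_ge0) //= ler_pdivrMr // mul1r.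
Qed.

End Feasible.
End Encoding.

Lemma Vstar_rec (R : realType) (n m N : nat) (G : nat -> 'I_n -> 'M[R]_(n, m))
    (r : nat -> 'I_n -> 'I_m -> R) (rN : 'I_n -> R) (t : nat) (i : 'I_n) :
  (t < N)%N ->
  Vstar R n m N G r rN t i =
  sup [set objective R n m (G t i) (r t i) (Vstar R n m N G r rN t.+1) P
      | P in decision_set R n m].
Proof.
move=> lttN; rewrite /Vstar.
have -> : (N - t = (N - t.+1).+1)%N by lia.
by rewrite /= (_ : (N - (N - t.+1).+1 = t)%N) //; lia.
Qed.

Theorem proposition2 (R : realType) (n m N : nat)
  (G : nat -> 'I_n -> 'M[R]_(n, m)) (r : nat -> 'I_n -> 'I_m -> R)
  (rN : 'I_n -> R) :
  (0 < m)%N -> (2 <= N)%N ->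
  (forall t i j k, (1 <= t <= N.-1)%N -> 0 <= G t i j k) ->
  (forall t i k, (1 <= t <= N.-1)%N -> \sum_j G t i j k = 1) ->
  forall (t : nat) (i : 'I_n), (1 <= t <= N.-1)%N ->
  let V1 := Vstar R n m N G r rN t.+1 in
  let H : 'M[R]_(n, m) := \matrix_(j, k) ((r t i k + V1 j) * G t i j k) in
  forall Xs : 'M[R]_(n, m), lp_optimal R n m (G t i) H Xs ->
  let Ps := recover R n m (G t i) Xs in
  Vstar R n m N G r rN t i = \tr (H^T *m Xs) /\
  decision_set R n m Ps /\
  (forall P, decision_set R n m P ->
     objective R n m (G t i) (r t i) V1 P <= objective R n m (G t i) (r t i) V1 Ps) /\
  objective R n m (G t i) (r t i) V1 Ps = Vstar R n m N G r rN t i.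
Proof.
move=> _ N_ge2 G_ge0 G_sum1 t i tN V1 H Xs [feasXs Xs_opt] Ps.
have decPs : decision_set R n m Ps by exact: recover_decision.
have obj_Ps : objective R n m (G t i) (r t i) V1 Ps = lp_obj R n m H Xs.
  by rewrite objective_occupation occupation_recover.
have Ps_opt P : decision_set R n m P ->
    objective R n m (G t i) (r t i) V1 P <= objective R n m (G t i) (r t i) V1 Ps.
  move=> decP; rewrite obj_Ps objective_occupation; apply: Xs_opt.
  apply: occupation_feasible decP => [j k|k]; first exact: G_ge0.
  by rewrite G_sum1.
have V_Ps : Vstar R n m N G r rN t i = objective R n m (G t i) (r t i) V1 Ps.
  rewrite Vstar_rec; first exact: sup_image_attained.
  case/andP: tN => _ le_tN; apply: leq_ltn_trans le_tN _.
  by rewrite ltn_predL ltnW.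
split; first by rewrite V_Ps obj_Ps lp_obj_mxtrace.
by rewrite V_Ps; split=> //; split.
Qed.
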